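(* Let $H$ and $G$ be as in the construction described in the context. If $H$ is torsion free, then so is $G$; if $H$ is locally indicable, then so is $G$.
   Context: A group is locally indicable if every nontrivial finitely generated subgroup admits a surjective homomorphism onto $\mathbb{Z}$. Construction: $H$ is a group generated by a countable set $\{a^{(1)},a^{(2)},\ldots\}$. For groups $A,B$, the wreath product $A\,\mathrm{Wr}\,B$ is the semidirect product $A^B\rtimes B$, where $A^B$ is the group of all functions $B\to A$ with pointwise multiplication and $B$ acts by $(bf)(x)=f(xb)$. Let $Z=\langle z\rangle$ be infinite cyclic and let $b^{(i)}\in H^Z$ be given by $b^{(i)}(z^k)=a^{(i)}$ if $k>0$ and $b^{(i)}(z^k)=1$ otherwise. Let $K=\langle z,b^{(i)}\ (i\in\mathbb{N})\rangle\le H\,\mathrm{Wr}\,Z$. Let $\langle s\rangle$ be infinite cyclic and let $c\in K^{\langle s\rangle}$ be given by $c(s)=z$, $c(s^{2^i})=b^{(i)}$ for $i>0$, and $c(s^k)=1$ otherwise. Let $G=\langle c,s\rangle\le K\,\mathrm{Wr}\,\langle s\rangle$. *)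

From Stdlib Require Import Bool ZArith List Lia FunctionalExtensionality ProofIrrelevance.
Open Scope Z_scope.

Record group := Group {
  carrier :> Type;
  mul : carrier -> carrier -> carrier;
  one : carrier;
  inv : carrier -> carrier;
  mulA : forall x y z, mul x (mul y z) = mul (mul x y) z;
  mul1g : forall x, mul one x = x;
  mulg1 : forall x, mul x one = x;
  mulVg : forall x, mul (inv x) x = one;
  mulgV : forall x, mul x (inv x) = one }.
Arguments mul {g}.
Arguments one {g}.
Arguments inv {g}.

Fixpoint gpow (G : group) (x : G) (n : nat) : G :=
  match n with O => one | S n => mul x (gpow G x n) end.

Inductive gen (G : group) (S : G -> Prop) : G -> Prop :=
  | gen_in : forall x, S x -> gen G S x
  | gen_one : gen G S one
  | gen_mul : forall x y, gen G S x -> gen G S y -> gen G S (mul x y)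
  | gen_inv : forall x, gen G S x -> gen G S (inv x).
Arguments gen {G}.

Lemma sig_eq_pi (T : Type) (P : T -> Prop) (x y : {t | P t}) :
  proj1_sig x = proj1_sig y -> x = y.
Proof. destruct x as [x px], y as [y py]; simpl; intros ->; f_equal; apply proof_irrelevance. Qed.

Definition gen_group (G : group) (S : G -> Prop) : group.
Proof.
  refine (@Group {x : G | gen S x}
    (fun x y => exist _ (mul (proj1_sig x) (proj1_sig y)) (gen_mul _ _ _ _ (proj2_sig x) (proj2_sig y)))
    (exist _ one (gen_one _ _))
    (fun x => exist _ (inv (proj1_sig x)) (gen_inv _ _ _ (proj2_sig x))) _ _ _ _ _);
  intros; apply sig_eq_pi; simpl;
  [apply mulA | apply mul1g | apply mulg1 | apply mulVg | apply mulgV].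
Defined.

(* Wreath product A Wr Z = A^Z ⋊ Z, with Z = <z> written additively (z^k = k).
   An element (f, m) stands for f * z^m; z acts by (z^m . g)(x) = g(x + m),
   i.e. (b g)(x) = g(x b). Hence (f,m)(g,n) = (x |-> f x * g (x+m), m+n). *)
Definition wr_mul (A : group) (p q : (Z -> A) * Z) : (Z -> A) * Z :=
  (fun x => mul (fst p x) (fst q (x + snd p)), snd p + snd q).
Definition wr_one (A : group) : (Z -> A) * Z := (fun _ => one, 0).
Definition wr_inv (A : group) (p : (Z -> A) * Z) : (Z -> A) * Z :=
  (fun x => inv (fst p (x - snd p)), - snd p).

Definition wrZ (A : group) : group.
Proof.
  refine (@Group ((Z -> A) * Z)%type (wr_mul A) (wr_one A) (wr_inv A) _ _ _ _ _);
  unfold wr_mul, wr_one, wr_inv.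
  - intros [f m] [g n] [h p]; simpl; f_equal; [|lia].
    apply functional_extensionality; intro x.
    rewrite mulA, Z.add_assoc; reflexivity.
  - intros [f m]; simpl; f_equal; apply functional_extensionality; intro x.
    rewrite Z.add_0_r; apply mul1g.
  - intros [f m]; simpl; f_equal; [|lia]; apply functional_extensionality; intro x.
    apply mulg1.
  - intros [f m]; simpl; f_equal; [|lia]; apply functional_extensionality; intro x.
    replace (x + - m) with (x - m) by lia; apply mulVg.
  - intros [f m]; simpl; f_equal; [|lia]; apply functional_extensionality; intro x.
    replace (x + m - m) with x by lia; apply mulgV.
Defined.

Section Construction.
Variables (H : group) (a : nat -> H).
(* a j stands for the generator a^(j+1) of the paper (indexing from 0). *)

Definition zel : wrZ H := (fun _ => one, 1).
(* b j = b^(j+1): b(z^k) = a^(j+1) if k > 0, 1 otherwise *)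
Definition bel (j : nat) : wrZ H := (fun k => if 0 <? k then a j else one, 0).

Definition K_gens (x : wrZ H) : Prop := x = zel \/ exists j, x = bel j.
Definition K : group := gen_group (wrZ H) K_gens.

Definition zK : K := exist _ zel (gen_in _ _ _ (or_introl eq_refl)).
Definition bK (j : nat) : K := exist _ (bel j) (gen_in _ _ _ (or_intror (ex_intro _ j eq_refl))).

(* c : <s> -> K with c(s) = z, c(s^(2^i)) = b^(i) for i > 0, c(s^k) = 1 otherwise.
   For k = 2^(j+1) we have Z.log2 k = j+1 and c(s^k) = b^(j+1) = bK j. *)
Definition cfun (k : Z) : K :=
  if k =? 1 then zK
  else if ((1 <? k) && (k =? 2 ^ Z.log2 k))%bool then bK (Z.to_nat (Z.log2 k - 1))
  else one.

Definition cel : wrZ K := (cfun, 0).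
Definition sel : wrZ K := (fun _ => one, 1).

Definition G_gens (x : wrZ K) : Prop := x = cel \/ x = sel.
Definition Ggrp : group := gen_group (wrZ K) G_gens.
End Construction.

Definition torsion_free (G : group) : Prop :=
  forall (x : G) (n : nat), x <> one -> (0 < n)%nat -> gpow G x n <> one.

Definition locally_indicable (G : group) : Prop :=
  forall S : list G,
    (exists x, gen (fun y => In y S) x /\ x <> one) ->
    exists phi : gen_group G (fun y => In y S) -> Z,
      (forall x y, phi (mul x y) = phi x + phi y) /\
      (forall n : Z, exists x, phi x = n).

From Stdlib Require Import ZArith List.
From Stdlib Require Import Classical FunctionalExtensionality Lia Wf_nat.
Open Scope Z_scope.

(* Both properties are inherited by subgroups and by the unrestricted wreath
   product [A Wr Z].  For torsion-freeness, a power of [(f, m)] has shift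
   [n m], and if [m = 0] it is computed coordinatewise.  For local
   indicability, a finitely generated subgroup [<S>] of [A Wr Z] either has a
   generator with nonzero shift, and then the shift map sends [<S>] onto a
   nontrivial subgroup of [Z], or it lies in the base [A^Z], where evaluation
   at a coordinate on which some element is nontrivial is a homomorphism onto
   a nontrivial finitely generated subgroup of [A].  Since [G] is obtained
   from [H] by taking twice a wreath product with [Z] and a subgroup, the
   theorem follows. *)

Lemma mul_idem_one (G : group) (e : G) : mul e e = e -> e = one.
Proof.
  intro E.
  transitivity (mul (inv e) (mul e e)).
  - rewrite mulA, mulVg, mul1g. reflexivity.
  - rewrite E. apply mulVg.
Qed.

Lemma inv_unique (G : group) (x y : G) : mul y x = one -> y = inv x.
Proof.
  intro E. rewrite <- (mulg1 G y), <- (mulgV G x), mulA, E, mul1g. reflexivity.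
Qed.

Definition indicable (G : group) : Prop :=
  exists phi : G -> Z,
    (forall x y, phi (mul x y) = phi x + phi y) /\ (forall n, exists x, phi x = n).

Lemma indicable_of_onto_hom (G A : group) (g : G -> A) :
  (forall x y, g (mul x y) = mul (g x) (g y)) -> (forall y, exists x, g x = y) ->
  indicable A -> indicable G.
Proof.
  intros g_mul g_onto [phi [phi_mul phi_onto]].
  exists (fun x => phi (g x)). split.
  - intros x y. rewrite g_mul. apply phi_mul.
  - intro n. destruct (phi_onto n) as [y <-]. destruct (g_onto y) as [x <-]. eauto.
Qed.

Section GeneratedImage.
Variables (G A : group) (f : G -> A) (S : list G).
Hypothesis f_mul : forall x y, gen (fun s => In s S) x -> gen (fun s => In s S) y ->
  f (mul x y) = mul (f x) (f y).

Lemma gen_f_one : f one = one.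
Proof.
  apply mul_idem_one. rewrite <- f_mul by apply gen_one. rewrite mul1g. reflexivity.
Qed.

Lemma gen_f_inv x : gen (fun s => In s S) x -> f (inv x) = inv (f x).
Proof.
  intro Hx. apply inv_unique.
  rewrite <- f_mul by (now apply gen_inv || exact Hx). rewrite mulVg. apply gen_f_one.
Qed.

Lemma gen_map x : gen (fun s => In s S) x -> gen (fun t => In t (map f S)) (f x).
Proof.
  induction 1 as [x Sx| |x y Hx IHx Hy IHy|x Hx IHx].
  - apply gen_in, in_map, Sx.
  - rewrite gen_f_one. apply gen_one.
  - rewrite f_mul by assumption. now apply gen_mul.
  - rewrite gen_f_inv by exact Hx. now apply gen_inv.
Qed.

Lemma gen_map_preimage y : gen (fun t => In t (map f S)) y ->
  exists x, gen (fun s => In s S) x /\ f x = y.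
Proof.
  induction 1 as [y Sy| |y1 y2 _ [x1 [Hx1 <-]] _ [x2 [Hx2 <-]]|y _ [x [Hx <-]]].
  - apply in_map_iff in Sy as [x [<- Sx]]. exists x. split; [apply gen_in, Sx|reflexivity].
  - exists one. split; [apply gen_one|apply gen_f_one].
  - exists (mul x1 x2). split; [now apply gen_mul|now apply f_mul].
  - exists (inv x). split; [now apply gen_inv|now apply gen_f_inv].
Qed.

Lemma indicable_gen_of_map :
  indicable (gen_group A (fun t => In t (map f S))) ->
  indicable (gen_group G (fun s => In s S)).
Proof.
  apply indicable_of_onto_hom with
    (g := fun x => exist _ (f (proj1_sig x)) (gen_map _ (proj2_sig x))).
  - intros [x Hx] [y Hy]. apply sig_eq_pi. now apply f_mul.
  - intros [y Hy]. destruct (gen_map_preimage y Hy) as [x [Hx Ex]].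
    exists (exist _ x Hx). now apply sig_eq_pi.
Qed.

Lemma locally_indicable_gen_of_map : locally_indicable A ->
  (exists x, gen (fun s => In s S) x /\ f x <> one) ->
  indicable (gen_group G (fun s => In s S)).
Proof.
  intros HA [x [Hx fx_neq1]].
  apply indicable_gen_of_map, HA. exists (f x). split; [now apply gen_map|exact fx_neq1].
Qed.

End GeneratedImage.

Lemma locally_indicable_gen_group (A : group) (P : A -> Prop) :
  locally_indicable A -> locally_indicable (gen_group A P).
Proof.
  intros HA S [x [Hx x_neq1]].
  apply (locally_indicable_gen_of_map _ A (fun x : gen_group A P => proj1_sig x));
    [reflexivity|exact HA|].
  exists x. split; [exact Hx|]. intro E. apply x_neq1. now apply sig_eq_pi.
Qed.

Lemma gpow_gen_group (A : group) (P : A -> Prop) (x : gen_group A P) n :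
  proj1_sig (gpow _ x n) = gpow A (proj1_sig x) n.
Proof. induction n as [|n IHn]; simpl; [reflexivity|]. now rewrite <- IHn. Qed.

Lemma torsion_free_gen_group (A : group) (P : A -> Prop) :
  torsion_free A -> torsion_free (gen_group A P).
Proof.
  intros HA x n x_neq1 n_pos E. apply (HA (proj1_sig x) n).
  - intro E'. apply x_neq1. now apply sig_eq_pi.
  - exact n_pos.
  - now rewrite <- gpow_gen_group, E.
Qed.

Definition Zgrp : group.
Proof. refine (@Group Z Z.add 0 Z.opp _ _ _ _ _); intros; lia. Defined.

Section SubgroupZ.
Variable P : Z -> Prop.
Hypotheses (P0 : P 0) (PD : forall x y, P x -> P y -> P (x + y)) (PN : forall x, P x -> P (- x)).

Lemma subgroupZ_mul d k : P d -> P (k * d).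
Proof.
  intro Pd.
  assert (Pnat : forall k, 0 <= k -> P (k * d)).
  { apply natlike_ind; [exact P0|]. intros j _ IH.
    replace (Z.succ j * d) with (j * d + d) by ring. auto. }
  destruct (Z_le_gt_dec 0 k); [auto|].
  replace (k * d) with (- ((- k) * d)) by ring. apply PN, Pnat. lia.
Qed.

Lemma subgroupZ_least_pos x0 : P x0 -> x0 <> 0 ->
  exists d, 0 < d /\ P d /\ forall q, 0 < q -> P q -> d <= q.
Proof.
  intros Px0 x0_neq0.
  set (Q n := 0 < Z.of_nat n /\ P (Z.of_nat n)).
  destruct (dec_inh_nat_subset_has_unique_least_element Q) as [n [[[n_pos Pn] n_least] _]].
  - intro n. apply classic.
  - exists (Z.to_nat (Z.abs x0)). unfold Q. rewrite Z2Nat.id by lia. split; [lia|].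
    destruct (Z.abs_eq_or_opp x0) as [-> | ->]; [exact Px0|now apply PN].
  - exists (Z.of_nat n). repeat split; [exact n_pos|exact Pn|].
    intros q q_pos Pq. enough (n <= Z.to_nat q)%nat by lia.
    apply n_least. unfold Q. rewrite Z2Nat.id by lia. auto.
Qed.

Lemma subgroupZ_cyclic x0 : P x0 -> x0 <> 0 ->
  exists d, 0 < d /\ forall x, P x <-> (d | x).
Proof.
  intros Px0 x0_neq0.
  destruct (subgroupZ_least_pos x0 Px0 x0_neq0) as [d [d_pos [Pd d_least]]].
  exists d. split; [exact d_pos|]. intro x. split.
  - intro Px. apply Z.mod_divide; [lia|].
    pose proof (Z.mod_pos_bound x d d_pos).
    assert (P (x mod d)).
    { replace (x mod d) with (x + (- (x / d)) * d) by (rewrite Z.mod_eq by lia; ring).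
      auto using subgroupZ_mul. }
    destruct (Z.eq_dec (x mod d) 0) as [|r_neq0]; [assumption|].
    enough (d <= x mod d) by lia. apply d_least; [lia|assumption].
  - intros [k ->]. now apply subgroupZ_mul.
Qed.

End SubgroupZ.

Lemma locally_indicable_Z : locally_indicable Zgrp.
Proof.
  intros S [x0 [Hx0 x0_neq0]].
  destruct (subgroupZ_cyclic (@gen Zgrp (fun s => In s S)) (gen_one _ _)
    (gen_mul Zgrp _) (gen_inv Zgrp _) x0 Hx0 x0_neq0) as [d [d_pos Hd]].
  exists (fun x : gen_group Zgrp (fun s => In s S) => proj1_sig x / d). split.
  - intros [x Hx] [y Hy]. simpl.
    destruct (proj1 (Hd x) Hx) as [kx ->], (proj1 (Hd y) Hy) as [ky ->].
    replace (kx * d + ky * d) with ((kx + ky) * d) by ring.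
    rewrite !Z.div_mul by lia. reflexivity.
  - intro n. exists (exist _ (n * d) (proj2 (Hd _) (Z.divide_factor_r d n))).
    apply Z.div_mul. lia.
Qed.

Lemma wrZ_neq1 (A : group) (x : wrZ A) :
  x <> one -> snd x <> 0 \/ exists k, fst x k <> one.
Proof.
  destruct x as [f m]. intro x_neq1. simpl.
  destruct (Z.eq_dec m 0) as [->|]; [right|left; assumption].
  apply NNPP. intro f_one. apply x_neq1. change ((f, 0) = (fun _ => one, 0)). f_equal.
  apply functional_extensionality. intro k.
  apply NNPP. intro fk_neq1. apply f_one. eauto.
Qed.

Lemma locally_indicable_wrZ (A : group) :
  locally_indicable A -> locally_indicable (wrZ A).
Proof.
  intros HA S [x0 [Hx0 x0_neq1]].
  destruct (classic (exists s, In s S /\ snd s <> 0)) as [[s [Ss s_shift]]|no_shift].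
  - apply (locally_indicable_gen_of_map _ Zgrp (fun x : wrZ A => snd x)); [reflexivity|exact locally_indicable_Z|].
    exists s. split; [apply gen_in, Ss|exact s_shift].
  - assert (gen_shift0 : forall x, gen (fun s => In s S) x -> snd x = 0).
    { induction 1 as [x Sx| |x y _ IHx _ IHy|x _ IHx].
      - apply NNPP. intro. apply no_shift. eauto.
      - reflexivity.
      - change (snd x + snd y = 0). lia.
      - change (- snd x = 0). lia. }
    destruct (wrZ_neq1 A x0 x0_neq1) as [x0_shift|[k x0k_neq1]].
    + now contradiction (gen_shift0 x0 Hx0).
    + apply (locally_indicable_gen_of_map _ A (fun x : wrZ A => fst x k)); [|exact HA|eauto].
      intros x y Hx _.
      change (mul (fst x k) (fst y (k + snd x)) = mul (fst x k) (fst y k)).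
      now rewrite (gen_shift0 x Hx), Z.add_0_r.
Qed.

Lemma gpow_wrZ_shift (A : group) (x : wrZ A) n : snd (gpow _ x n) = Z.of_nat n * snd x.
Proof.
  induction n as [|n IHn]; [reflexivity|].
  change (snd x + snd (gpow _ x n) = Z.of_nat (S n) * snd x). rewrite IHn. lia.
Qed.

Lemma gpow_wrZ_base (A : group) (x : wrZ A) n k : snd x = 0 ->
  fst (gpow _ x n) k = gpow A (fst x k) n.
Proof.
  intro x_shift. induction n as [|n IHn]; [reflexivity|].
  change (mul (fst x k) (fst (gpow _ x n) (k + snd x)) = mul (fst x k) (gpow A (fst x k) n)).
  now rewrite x_shift, Z.add_0_r, IHn.
Qed.

Lemma torsion_free_wrZ (A : group) : torsion_free A -> torsion_free (wrZ A).
Proof.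
  intros HA x n x_neq1 n_pos E.
  destruct (Z.eq_dec (snd x) 0) as [x_shift|x_shift].
  - destruct (wrZ_neq1 A x x_neq1) as [|[k xk_neq1]]; [contradiction|].
    apply (HA (fst x k) n xk_neq1 n_pos).
    now rewrite <- gpow_wrZ_base, E.
  - apply (f_equal snd) in E. rewrite gpow_wrZ_shift in E.
    change (Z.of_nat n * snd x = 0) in E. nia.
Qed.

Theorem corollary3 (H : group) (a : nat -> H)
  (Hgen : forall h : H, gen (fun x => exists i, x = a i) h) :
  (torsion_free H -> torsion_free (Ggrp H a)) /\
  (locally_indicable H -> locally_indicable (Ggrp H a)).
Proof.
  split; intro HH; unfold Ggrp, K.
  - apply torsion_free_gen_group, torsion_free_wrZ, torsion_free_gen_group, torsion_free_wrZ, HH.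
  - apply locally_indicable_gen_group, locally_indicable_wrZ,
      locally_indicable_gen_group, locally_indicable_wrZ, HH.
Qed.
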